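(* Let $\mathcal{N}$ be a deterministic negotiation such that for every node $n\in N$ that is reachable from $n_{\mathit{init}}$ by a local path, and every process $p\in\mathit{dom}(n)$, there exists a $p$-path from $n$ to $n_{\mathit{fin}}$. Then $\mathcal{N}$ is unsound if and only if some initial run leads to a deadlock configuration.
   Context: A negotiation is a tuple $\mathcal{N}=(\mathit{Proc},N,\mathit{dom},R,\delta)$ where $\mathit{Proc}$ is a finite set of processes, $N$ is a finite set of nodes (atomic negotiations), $\mathit{dom}:N\to 2^{\mathit{Proc}}\setminus\{\emptyset\}$, there are two distinguished nodes $n_{\mathit{init}},n_{\mathit{fin}}$ with $\mathit{dom}(n_{\mathit{init}})=\mathit{dom}(n_{\mathit{fin}})=\mathit{Proc}$, $R$ is a set of results, each node $n$ has a set $\mathit{out}(n)\subseteq R$ of results (nonempty for $n\neq n_{\mathit{fin}}$), and $\delta(n,a,p)\subseteq N$ is defined and nonempty exactly when $a\in\mathit{out}(n)$ and $p\in\mathit{dom}(n)$, with $p\in\mathit{dom}(n')$ for all $n'\in\delta(n,a,p)$. A configuration is a map $C$ assigning to each process a nonempty set of nodes; $C_{\mathit{init}}(p)=\{n_{\mathit{init}}\}$ and $C_{\mathit{fin}}(p)=\{n_{\mathit{fin}}\}$ for all $p$. A node $n$ is enabled in $C$ if $n\in C(p)$ for all $p\in\mathit{dom}(n)$; $C$ is a deadlock if no node is enabled in it. If $n$ is enabled in $C$ and $a\in\mathit{out}(n)$, then $C\xrightarrow{(n,a)}C'$ where $C'(p)=\delta(n,a,p)$ for $p\in\mathit{dom}(n)$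 and $C'(p)=C(p)$ otherwise. A run from $C_1$ is a finite or infinite sequence $(n_1,a_1)(n_2,a_2)\cdots$ with $C_1\xrightarrow{(n_1,a_1)}C_2\xrightarrow{(n_2,a_2)}\cdots$; a run is initial if it starts at $C_{\mathit{init}}$, and successful if it is initial, finite and ends in $C_{\mathit{fin}}$. $\mathcal{N}$ is sound if every finite initial run can be extended to a successful run. The graph of $\mathcal{N}$ has vertex set $N$ and an edge $n\xrightarrow{p,a}n'$ whenever $n'\in\delta(n,a,p)$. A local path is a path $n_0\xrightarrow{p_0,a_0}n_1\cdots\xrightarrow{p_{k-1},a_{k-1}}n_k$ in this graph; it is a $p$-path if $p_0=\dots=p_{k-1}=p$. A process $p$ is deterministic if $\delta(n,a,p)$ is a singleton for all $n$ with $p\in\mathit{dom}(n)$ and all $a\in\mathit{out}(n)$; $\mathcal{N}$ is deterministic if every process is deterministic. *)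

From mathcomp Require Import all_boot.
From Stdlib Require Import Relation_Operators.
Set Implicit Arguments. Unset Strict Implicit. Unset Printing Implicit Defensive.

(* A negotiation with process type P, node type N, result type R.
   delta n a p is encoded as the empty set when it is undefined
   (i.e. when a \notin out n or p \notin dom n). *)
Record negotiation (P N R : finType) := Negotiation {
  dom : N -> {set P};
  n_init : N;
  n_fin : N;
  out : N -> {set R};
  delta : N -> R -> P -> {set N}
}.

Section Neg.
Variables (P N R : finType) (G : negotiation P N R).

Definition wf_negotiation : Prop :=
  [/\ (forall n, dom G n != set0),
      n_init G != n_fin G,
      dom G (n_init G) = [set: P] /\ dom G (n_fin G) = [set: P],
      (forall n, n != n_fin G -> out G n != set0) &
      (forall n a p,
         if (a \in out G n) && (p \in dom G n) then
           delta G n a p != set0 /\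
           (forall n', n' \in delta G n a p -> p \in dom G n')
         else delta G n a p = set0)].

Definition config := {ffun P -> {set N}}.

Definition C_init : config := [ffun => [set n_init G]].
Definition C_fin : config := [ffun => [set n_fin G]].

Definition enabled (n : N) (C : config) : Prop :=
  forall p, p \in dom G n -> n \in C p.

Definition deadlock (C : config) : Prop := forall n, ~ enabled n C.

Definition step (C : config) (na : N * R) (C' : config) : Prop :=
  let: (n, a) := na in
  [/\ enabled n C, a \in out G n &
      C' = [ffun p => if p \in dom G n then delta G n a p else C p]].

Inductive is_run : config -> seq (N * R) -> config -> Prop :=
| run_nil C : is_run C [::] C
| run_cons C na C' s C'' :
    step C na C' -> is_run C' s C'' -> is_run C (na :: s) C''.

Definition sound : Prop :=
  forall s C, is_run C_init s C -> exists s', is_run C s' C_fin.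

Definition edge (p : P) (a : R) (n n' : N) : Prop :=
  [/\ a \in out G n, p \in dom G n & n' \in delta G n a p].

Definition local_reach : N -> N -> Prop :=
  clos_refl_trans N (fun n n' => exists p a, edge p a n n').

Definition p_reach (p : P) : N -> N -> Prop :=
  clos_refl_trans N (fun n n' => exists a, edge p a n n').

Definition deterministic : Prop :=
  forall n a p, p \in dom G n -> a \in out G n -> #|delta G n a p| = 1.

End Neg.

(* A run ending in a deadlock cannot be extended, so one direction is immediate.
   Conversely, let C be reachable but unable to reach C_fin, and assume no
   reachable deadlock.  Move from C to a configuration K of a bottom strongly
   connected component of the (finite) reachability graph.  By determinism every
   process sits at a single node in every reachable configuration.  Some node n
   is enabled in K; take p in dom n and a p-path from n to n_fin.  Following that
   path, each node m on it is enabled in some configuration reachable from K in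
   which p sits at m: fire m to move p to the next node m'; since K is bottom we
   can return to K, and unless m' is n itself, p has to leave m' on the way back,
   which requires m' to be enabled.  At the end n_fin is enabled, which forces
   the configuration to be C_fin, a contradiction. *)
From Stdlib Require Import Relation_Definitions Relation_Operators Operators_Properties.
From mathcomp Require Import all_boot boolp.

Set Implicit Arguments. Unset Strict Implicit. Unset Printing Implicit Defensive.

Lemma finite_preorder_has_bottom (T : finType) (r : relation T) :
  preorder T r -> forall x, exists2 y, r x y & forall z, r y z -> r z y.
Proof.
case=> r_refl r_trans x.
(* Take y above x with the fewest elements above it; anything above y then has
   exactly the same up-set, which contains y. *)
pose up y := [set z | `[< r y z >]].
case: (@arg_minnP _ x (fun y => `[< r x y >]) (fun y => #|up y|)).
  exact/asboolP.
move=> y /asboolP rxy ymin; exists y => // z ryz.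
have up_zy : up z \subset up y.
  by apply/subsetP => w; rewrite !inE => /asboolP rzw; apply/asboolP; apply: r_trans rzw.
have /subset_cardP/(_ up_zy) eq_up : #|up z| = #|up y|.
  apply/eqP; rewrite eqn_leq subset_leq_card // ymin //.
  by apply/asboolP; apply: r_trans ryz.
have : y \in up y by rewrite inE; apply/asboolP.
by rewrite -eq_up inE => /asboolP.
Qed.

Section Negotiation.
Variables (P N R : finType) (G : negotiation P N R).

Definition reachable (C C' : config P N) : Prop := exists s, is_run G C s C'.

Lemma reachable_refl C : reachable C C.
Proof. by exists [::]; constructor. Qed.

Lemma reachable_trans C C' C'' : reachable C C' -> reachable C' C'' -> reachable C C''.
Proof.
move=> [s run_s] [t run_t]; exists (s ++ t).
by elim: run_s run_t => //= C0 na C1 s0 C2 st _ IH /IH; apply: run_cons.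
Qed.

Lemma reachable_preorder : preorder (config P N) reachable.
Proof. split; [exact: reachable_refl | exact: reachable_trans]. Qed.

Lemma step_reachable C na C' : step G C na C' -> reachable C C'.
Proof. by move=> st; exists [:: na]; apply: run_cons st (run_nil _ _). Qed.

Lemma deadlock_reachable C C' : deadlock G C -> reachable C C' -> C' = C.
Proof. by move=> dl [s run]; case: run dl => // {}C [n a] C1 {}s C2 [en _ _] _ /(_ n). Qed.

Lemma enabled_fin_C_fin : enabled G (n_fin G) (C_fin G).
Proof. by move=> p _; rewrite ffunE inE. Qed.

Lemma step_notin_dom C n a C' p :
  step G C (n, a) C' -> p \notin dom G n -> C' p = C p.
Proof. by case=> _ _ -> /negPf p_out; rewrite ffunE p_out. Qed.

Lemma run_leaves_node C s C' p m :
  is_run G C s C' -> C p = [set m] -> C' p != [set m] ->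
  exists2 D, reachable C D & D p = [set m] /\ enabled G m D.
Proof.
elim=> [C0 -> /eqP //|C0 [n a] C1 s0 C2 st _ IH] C0p C2p.
case: (boolP (p \in dom G n)) => [p_in|p_out].
  have [en _ _] := st.
  have := en p p_in; rewrite C0p inE => /eqP n_m; subst n.
  by exists C0; first exact: reachable_refl.
have [D reach_D D_m] := IH (etrans (step_notin_dom st p_out) C0p) C2p.
by exists D => //; apply: reachable_trans (step_reachable st) reach_D.
Qed.

Hypothesis detG : deterministic G.

Lemma deterministic_delta n a p m :
  p \in dom G n -> a \in out G n -> m \in delta G n a p -> delta G n a p = [set m].
Proof.
move=> p_in a_out; have /eqP/cards1P [y ->] := detG p_in a_out.
by rewrite inE => /eqP ->.
Qed.

Lemma fire_edge C p a m m' :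
  enabled G m C -> edge G p a m m' ->
  exists2 C', step G C (m, a) C' & C' p = [set m'].
Proof.
move=> en [a_out p_in m'_in].
exists [ffun q => if q \in dom G m then delta G m a q else C q] => //.
by rewrite ffunE p_in (deterministic_delta p_in a_out m'_in).
Qed.

Definition local_config (C : config P N) : Prop :=
  forall q, exists2 x, C q = [set x] & local_reach G (n_init G) x.

Lemma local_config_step C na C' :
  local_config C -> step G C na C' -> local_config C'.
Proof.
case: na => n a locC st q.
case: (boolP (q \in dom G n)) => [q_in|q_out]; last by rewrite (step_notin_dom st q_out).
have [en a_out ->] := st; rewrite ffunE q_in.
have [x Cq loc_x] := locC q.
have := en q q_in; rewrite Cq inE => /eqP n_x; subst x.
have [y y_in] : exists y, y \in delta G n a q.
  by have /eqP/cards1P [y ->] := detG q_in a_out; exists y; rewrite inE.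
exists y; first exact: deterministic_delta y_in.
by apply: rt_trans loc_x (rt_step _ _ _ _ _); exists q, a.
Qed.

Lemma local_config_reachable C : reachable (C_init G) C -> local_config C.
Proof.
have loc_init : local_config (C_init G).
  by move=> q; exists (n_init G); rewrite ?ffunE //; apply: rt_refl.
case=> s run_s; elim: run_s loc_init => // C0 na C1 s0 C2 st _ IH locC0.
exact/IH/(local_config_step locC0 st).
Qed.

Definition bottom (K : config P N) : Prop := forall K', reachable K K' -> reachable K' K.

Lemma bottom_p_reach K p n m :
  bottom K -> K p = [set n] -> enabled G n K -> p_reach G p n m ->
  exists2 K', reachable K K' & K' p = [set m] /\ enabled G m K'.
Proof.
move=> botK Kp enK path_nm.
elim: (clos_rt_rtn1 _ _ _ _ path_nm) => [|m1 m2 [a e12] _ [K1 reach_K1 [K1p enK1]]].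
  by exists K; first exact: reachable_refl.
have [K2 st K2p] := fire_edge enK1 e12.
have reach_K2 := reachable_trans reach_K1 (step_reachable st).
case: (eqVneq n m2) => [<-|n_m2]; first by exists K; first exact: reachable_refl.
have [s back] := botK _ reach_K2.
have K_m2 : K p != [set m2] by rewrite Kp (inj_eq set1_inj).
have [D reach_D D_m2] := run_leaves_node back K2p K_m2.
by exists D => //; apply: reachable_trans reach_K2 reach_D.
Qed.

Hypothesis wfG : wf_negotiation G.

Lemma local_config_enabled_fin C :
  local_config C -> enabled G (n_fin G) C -> C = C_fin G.
Proof.
have [_ _ [_ dom_fin] _ _] := wfG.
move=> locC en; apply/ffunP => q; rewrite ffunE.
have [x Cq _] := locC q.
by have := en q; rewrite dom_fin Cq inE => /(_ (in_setT q)) /eqP ->.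
Qed.

Hypothesis p_path_to_fin : forall n, local_reach G (n_init G) n ->
  forall p, p \in dom G n -> p_reach G p n (n_fin G).

Lemma deadlock_free_reachable_fin :
  (forall D, reachable (C_init G) D -> ~ deadlock G D) ->
  forall C, reachable (C_init G) C -> reachable C (C_fin G).
Proof.
move=> no_deadlock C reach_C.
have [K reach_CK botK] := finite_preorder_has_bottom reachable_preorder C.
have reach_K := reachable_trans reach_C reach_CK.
have [n enK] : exists n, enabled G n K.
  by apply/not_existsP => dlK; exact: no_deadlock reach_K dlK.
have [p p_in] : exists p, p \in dom G n.
  by have [dom_ne _ _ _ _] := wfG; apply/set0Pn.
have [x Kp loc_x] := local_config_reachable reach_K p.
have := enK p p_in; rewrite Kp inE => /eqP n_x; subst x.
have [K' reach_K' [_ enK']] := bottom_p_reach botK Kp enK (p_path_to_fin loc_x p_in).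
have locK' := local_config_reachable (reachable_trans reach_K reach_K').
rewrite -(local_config_enabled_fin locK' enK').
exact: reachable_trans reach_CK reach_K'.
Qed.

End Negotiation.

Theorem lemma2p3 (P N R : finType) (G : negotiation P N R) :
  wf_negotiation G ->
  deterministic G ->
  (forall n, local_reach G (n_init G) n ->
     forall p, p \in dom G n -> p_reach G p n (n_fin G)) ->
  (~ sound G <-> exists s C, is_run G (C_init G) s C /\ deadlock G C).
Proof.
move=> wfG detG p_path_to_fin.
split=> [unsound | [s [C [run_C dlC]]] soundG].
  apply: contrapT => no_deadlock; apply: unsound => s C run_C.
  apply: (deadlock_free_reachable_fin detG wfG p_path_to_fin _ (ex_intro _ s run_C)).
  by move=> D [t run_D] dlD; apply: no_deadlock; exists t, D.
have [s' run_fin] := soundG s C run_C.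
have fin_C := deadlock_reachable dlC (ex_intro _ s' run_fin).
by apply: (dlC (n_fin G)); rewrite -fin_C; exact: enabled_fin_C_fin.
Qed.
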